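(* Let $p$ be an odd prime and $G$ an extraspecial $p$-group of exponent $p^2$. Let $V,B,T,Q$ be as in the context and let $\mathcal B=\{v_1,w_1,\dots,v_n,w_n\}$ be a special symplectic basis for $(B,T)$. (i) If $v,w\in V\setminus\{0\}$ are distinct with $T(v)=T(w)$, and either both $v,w\notin\ker(T)$ or both $v,w\notin\mathrm{span}(w_1)$, then $v$ and $w$ lie in the same $Q$-orbit. (ii) If $|G|=p^3$, the action of $Q$ on $V\setminus\{0\}$ has exactly $2p-2$ orbits, represented by $av_1$ and $bw_1$ with $a,b\in GF(p)\setminus\{0\}$. (iii) If $|G|>p^3$, the action of $Q$ on $V\setminus\{0\}$ has exactly $2p-1$ orbits, represented by $av_1$, $bw_1$ ($a,b\in GF(p)\setminus\{0\}$) and $v_2$.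
   Context: A special $p$-group is a finite $p$-group whose center, derived subgroup and Frattini subgroup coincide and are elementary abelian; it is extraspecial if $|Z(G)|=p$. Here $V=G/Z(G)$ is a $GF(p)$-vector space, $Z(G)$ is identified with $GF(p)$, $B:V\times V\to GF(p)$ is the nondegenerate alternating form $B(gZ(G),hZ(G))=[g,h]=ghg^{-1}h^{-1}$, and $T:V\to GF(p)$ is the linear map $T(gZ(G))=g^p$ (nonzero since $\exp(G)=p^2$). A special symplectic basis is a basis $\{v_1,w_1,\dots,v_n,w_n\}$ of $V$ with $B(v_i,w_i)=1$, $B(v_i,w_j)=B(v_i,v_j)=B(w_i,w_j)=0$ for $i\ne j$, $T(v_1)=1$ and $T(u)=0$ for all other basis vectors $u$; such a basis exists. $\mathrm{Aut}_{Z(G)}(G)$ is the group of automorphisms of $G$ acting trivially on $Z(G)$, for such $\varphi$ the map $f_\varphi:V\to V$ is $f_\varphi(gZ(G))=\varphi(g)Z(G)$, and $Q=\{f_\varphi:\varphi\in\mathrm{Aut}_{Z(G)}(G)\}$ acts on $V$ by $(f,v)\mapsto f(v)$. *)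

From mathcomp Require Import all_boot all_fingroup all_solvable.
Set Implicit Arguments. Unset Strict Implicit. Unset Printing Implicit Defensive.

Local Open Scope group_scope.

Section ExtraspecialDefs.
Variables (gT : finGroupType) (G : {group gT}) (p : nat).

(* V = G / Z(G), elements are cosets of Z(G); the vector addition of V is the
   (commutative) group law of the quotient, the zero vector is 1, and the scalar
   multiple a.x (a in GF(p) = {0,..,p-1}) is x ^+ a. *)
Local Notation cT := (coset_of 'Z(G)).
Definition Vsp : {set cT} := G / 'Z(G).

(* B(gZ, hZ) = g h g^-1 h^-1, an element of Z(G) (values read through the chosen
   identification of Z(G) with GF(p), see the theorem). *)
Definition Bform (x y : cT) : gT :=
  let g := repr x in let h := repr y in g * h * g^-1 * h^-1.

Definition Tmap (x : cT) : gT := repr x ^+ p.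

(* A special symplectic basis {v_1,w_1,...,v_n,w_n}; v_(i+1) = v i, w_(i+1) = w i
   for i < n.  The element z of Z(G) is the one identified with 1 in GF(p)
   (so z ^+ a corresponds to a, and the identity of gT to 0). *)
Definition lincomb (n : nat) (v w : nat -> cT) (c : {ffun 'I_n -> 'I_p * 'I_p}) : cT :=
  \prod_(i < n) (v i ^+ (c i).1 * w i ^+ (c i).2).
Arguments lincomb n v w c : clear implicits.

Definition special_symplectic_basis (z : gT) (n : nat) (v w : nat -> cT) : Prop :=
  [/\
      [/\ (forall i, i < n -> v i \in Vsp /\ w i \in Vsp),
          injective (lincomb n v w)
        & (forall x, x \in Vsp -> exists c, lincomb n v w c = x)],
      (forall i, i < n -> Bform (v i) (w i) = z),
      (forall i j, i < n -> j < n -> i != j ->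
         [/\ Bform (v i) (w j) = 1, Bform (v i) (v j) = 1 & Bform (w i) (w j) = 1])
    &
      [/\ 0 < n, Tmap (v 0) = z,
          (forall i, 0 < i < n -> Tmap (v i) = 1)
        & (forall i, i < n -> Tmap (w i) = 1)]].

Definition AutZ : {set {perm gT}} :=
  [set f in Aut G | [forall c in 'Z(G), f c == c]].

Definition fphi (f : {perm gT}) : {ffun cT -> cT} :=
  [ffun x : cT => coset 'Z(G) (f (repr x))].

Definition Qgrp : {set {ffun cT -> cT}} := [set fphi f | f in AutZ].

Definition Qorbit (u : cT) : {set cT} := [set (q : {ffun cT -> cT}) u | q in Qgrp].

Definition Qorbits : {set {set cT}} := [set Qorbit u | u in Vsp :\ 1].

End ExtraspecialDefs.

Arguments special_symplectic_basis [gT] G p z n v w.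
Arguments Qorbit [gT] G u.
Arguments lincomb [gT G] p n v w c.

(* Automorphisms of G centralising Z(G) preserve T, and they fix the coset of w_1,
   because w_1 is determined by B(x, w_1) = T(x) for all x.  Conversely, for a in G with
   a^p = 1 the commutator map x |-> [a, x] = z^(k x) is a homomorphism G -> Z(G), and
   x |-> x a^(c k x) z^(c binom(k x, 2)) is an automorphism centralising Z(G); taking
   c = (k u)^-1 mod p it moves u to u a modulo Z(G).  So x and x + d lie in one orbit
   whenever T(d) = 0 and B(d, x) <> 0.  Since the B-annihilator of ker T is span(w_1),
   two vectors outside span(w_1) with the same value of T are joined by at most two such
   steps.  The orbits are therefore the fibres of T off span(w_1) and the singletons of
   span(w_1), and |G| = p^(2n+1) separates the cases n = 1 and n > 1. *)

From mathcomp Require Import all_boot all_fingroup all_solvable zify.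
Set Implicit Arguments. Unset Strict Implicit. Unset Printing Implicit Defensive.

Lemma bin2D m n : 'C(m + n, 2) = 'C(m, 2) + 'C(n, 2) + m * n.
Proof.
elim: n => [|n IHn]; first by rewrite addn0 bin0n muln0 !addn0.
by rewrite addnS !binS IHn !bin1; lia.
Qed.

Lemma bin2_modp p n : prime p -> odd p -> 'C(n %% p, 2) = 'C(n, 2) %[mod p].
Proof.
move=> pr_p odd_p; have p_gt2 : 2 < p by case: p pr_p odd_p => [|[|[|]]].
rewrite [in RHS](divn_eq n p) bin2D.
have dvd_p_bin2_mul q : p %| 'C(q * p, 2).
  elim: q => [|q IHq]; first by rewrite mul0n.
  rewrite mulSn bin2D !dvdn_add ?dvdn_mulr //; apply: prime_dvd_bin; lia.
have [k ->] := dvdnP (dvd_p_bin2_mul (n %/ p)).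
by rewrite -addnA modnMDl mulnAC addnC modnMDl.
Qed.

Lemma modn_inv_prime p k : prime p -> 0 < k < p -> exists c, c * k = 1 %[mod p].
Proof.
move=> pr_p /andP[k_gt0 lt_kp]; have: coprime k p.
  by rewrite coprime_sym prime_coprime // gtnNdvd.
case/(coprimeP _ k_gt0) => [[c d] /= ck1]; exists c.
by rewrite (_ : c * k = d * p + 1) ?modnMDl //; lia.
Qed.

Lemma card_ord_gt0 p : 0 < p -> #|[set a : 'I_p | 0 < a]| = p.-1.
Proof.
move=> p_gt0; have := cardsC1 (Ordinal p_gt0); rewrite card_ord => <-.
by apply: eq_card => a; rewrite !inE lt0n.
Qed.

Local Open Scope group_scope.

Lemma prodg_single (gT : finGroupType) n (F : 'I_n -> gT) j :
  (forall i, i != j -> F i = 1) -> \prod_(i < n) F i = F j.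
Proof.
move=> F1; rewrite (eq_bigr (fun i => if i == j then F j else 1)).
  by rewrite -big_mkcond big_pred1_eq.
by move=> i _; case: eqP => [->|/eqP/F1].
Qed.

Lemma expg_eq1_small (gT : finGroupType) (x : gT) k :
  k < #[x] -> (x ^+ k == 1) = (k == 0).
Proof. by move=> lt_kx; rewrite -[1](expg0 x) eq_expg_mod_order mod0n modn_small. Qed.

Section ClassTwo.
Variables (gT : finGroupType) (G : {group gT}).
Hypothesis sG'Z : [~: G, G] \subset 'Z(G).

Lemma commg_center x y : x \in G -> y \in G -> [~ x, y] \in 'Z(G).
Proof. by move=> xG yG; rewrite (subsetP sG'Z) ?mem_commg. Qed.

Lemma commute_commg x y t : x \in G -> y \in G -> t \in G -> commute t [~ x, y].
Proof. by move=> xG yG tG; case/centerP: (commg_center xG yG) => _ /(_ t tG). Qed.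

Lemma commMg_class2 x y t : x \in G -> y \in G -> t \in G ->
  [~ x * y, t] = [~ x, t] * [~ y, t].
Proof.
move=> xG yG tG; rewrite commMgJ.
by have /conjg_fixP-> : [~ [~ x, t], y] == 1 by exact/commgP/commute_sym/commute_commg.
Qed.

Lemma commgM_class2 x y t : x \in G -> y \in G -> t \in G ->
  [~ t, x * y] = [~ t, x] * [~ t, y].
Proof.
move=> xG yG tG; rewrite commgMJ.
have /conjg_fixP-> : [~ [~ t, x], y] == 1 by exact/commgP/commute_sym/commute_commg.
by apply: commute_commg; rewrite ?groupR.
Qed.

End ClassTwo.

Section CenterQuotient.
Variables (gT : finGroupType) (G : {group gT}).

Local Notation V := (Vsp G).
Local Notation cs := (coset 'Z(G)).

Let sZG : 'Z(G) \subset G := center_sub G.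
Let nZG : G \subset 'N('Z(G)) := normal_norm (center_normal G).

Lemma VspP x : reflect (exists2 g, g \in G & x = cs g) (x \in V).
Proof.
apply: (iffP idP) => [/morphimP[g _ gG ->]|[g gG ->]]; [by exists g | exact: mem_quotient].
Qed.

Lemma repr_coset_center g : g \in G -> exists2 c, c \in 'Z(G) & repr (cs g) = c * g.
Proof.
move=> gG; have := mem_repr_coset (cs g).
rewrite val_coset; last exact: subsetP nZG g gG.
by case/rcosetP => c Zc ->; exists c.
Qed.

Lemma group_set_AutZ : group_set (AutZ G).
Proof.
apply/group_setP; split=> [|f h]; rewrite ![_ \in AutZ G]inE.
  by rewrite group1; apply/forall_inP => c _; rewrite perm1.
case/andP=> Af /forall_inP fZ /andP[Ah /forall_inP hZ].
by rewrite groupM //; apply/forall_inP => c Zc; rewrite permM (eqP (fZ c Zc)) hZ.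
Qed.

Canonical AutZ_group := group group_set_AutZ.

Lemma AutZ_Aut f : f \in AutZ G -> f \in Aut G.
Proof. by rewrite inE => /andP[]. Qed.

Lemma AutZ_fix f c : f \in AutZ G -> c \in 'Z(G) -> f c = c.
Proof. by rewrite inE => /andP[_ /forall_inP fZ] /fZ /eqP. Qed.

Lemma AutZ_closed f g : f \in AutZ G -> g \in G -> f g \in G.
Proof. by move/AutZ_Aut/Aut_closed; apply. Qed.

Lemma fphiE f g : f \in AutZ G -> g \in G -> fphi G f (cs g) = cs (f g).
Proof.
move=> AZf gG; rewrite ffunE; have [c Zc ->] := repr_coset_center gG.
have Gc : c \in G by rewrite (subsetP sZG).
by rewrite -(autmE (AutZ_Aut AZf)) morphM //= autmE (AutZ_fix AZf Zc) coset_kerl.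
Qed.

Lemma fphiM f h x : f \in AutZ G -> h \in AutZ G -> x \in V ->
  fphi G (f * h) x = fphi G h (fphi G f x).
Proof.
move=> AZf AZh /VspP[g gG ->].
by rewrite !fphiE ?groupM ?AutZ_closed // permM.
Qed.

Lemma fphiX f x k : f \in AutZ G -> x \in V -> fphi G f (x ^+ k) = fphi G f x ^+ k.
Proof.
move=> AZf /VspP[g gG ->]; rewrite -morphX ?(subsetP nZG) // !fphiE ?groupX //.
by rewrite -(autmE (AutZ_Aut AZf)) !morphX // (subsetP nZG) //= autmE AutZ_closed.
Qed.

Lemma fphi_Vsp f x : f \in AutZ G -> x \in V -> fphi G f x \in V.
Proof. by move=> AZf /VspP[g gG ->]; rewrite fphiE // mem_quotient ?AutZ_closed. Qed.

Lemma QorbitP x y :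
  reflect (exists2 f, f \in AutZ G & y = fphi G f x) (y \in Qorbit G x).
Proof.
apply: (iffP imsetP) => [[_ /imsetP[f AZf ->] ->]|[f AZf ->]]; first by exists f.
by exists (fphi G f); rewrite ?imset_f.
Qed.

Lemma Qorbit_refl x : x \in V -> x \in Qorbit G x.
Proof.
by move=> /VspP[g gG ->]; apply/QorbitP; exists 1; rewrite ?group1 ?fphiE ?perm1.
Qed.

Lemma Qorbit_trans x y t : x \in V -> y \in Qorbit G x -> t \in Qorbit G y ->
  t \in Qorbit G x.
Proof.
move=> xV /QorbitP[f AZf ->] /QorbitP[h AZh ->].
by apply/QorbitP; exists (f * h); rewrite ?groupM ?fphiM.
Qed.

Lemma Qorbit_sym x y : x \in V -> y \in Qorbit G x -> x \in Qorbit G y.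
Proof.
move=> xV /QorbitP[f AZf ->]; apply/QorbitP; exists f^-1; rewrite ?groupV //.
by rewrite -fphiM ?groupV // mulgV; case/VspP: xV => g gG ->; rewrite fphiE ?perm1.
Qed.

Lemma Qorbit_eq x y : x \in V -> y \in Qorbit G x -> Qorbit G y = Qorbit G x.
Proof.
move=> xV yx; have yV : y \in V by case/QorbitP: yx => f AZf ->; apply: fphi_Vsp.
apply/setP => t; apply/idP/idP; first exact: Qorbit_trans.
by apply: Qorbit_trans (Qorbit_sym xV yx).
Qed.

End CenterQuotient.

Section Extraspecial.
Variables (gT : finGroupType) (G : {group gT}) (p : nat).
Hypotheses (pr_p : prime p) (odd_p : odd p) (pG : p.-group G) (esG : extraspecial G).

Local Notation V := (Vsp G).
Local Notation cs := (coset 'Z(G)).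
Local Notation B := (@Bform _ G).
Local Notation T := (@Tmap _ G p).

Let sG'Z : [~: G, G] \subset 'Z(G).
Proof. by case: esG => [[_ <-] _]. Qed.

Let sZG : 'Z(G) \subset G := center_sub G.
Let nZG : G \subset 'N('Z(G)) := normal_norm (center_normal G).

Lemma expg_center_p c : c \in 'Z(G) -> c ^+ p = 1.
Proof.
move=> cZ; apply/eqP; rewrite -order_dvdn -(card_center_extraspecial pG esG).
exact: order_dvdG.
Qed.

Lemma expg_p_center g : g \in G -> g ^+ p \in 'Z(G).
Proof.
move=> gG; case: esG => [[<- _] _]; rewrite (Phi_joing pG) mem_gen // inE orbC.
by rewrite -[p]expn1 Mho_p_elt ?(mem_p_elt pG).
Qed.

Lemma expgMn_p g h : g \in G -> h \in G -> (g * h) ^+ p = g ^+ p * h ^+ p.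
Proof.
move=> gG hG; rewrite expMg_Rmul; try exact: (commute_commg sG'Z).
have /dvdnP[k ->] : p %| 'C(p, 2).
  by apply: prime_dvd_bin; case: p pr_p odd_p => [|[|[|]]].
by rewrite [(k * p)%N]mulnC expgM (expg_center_p (commg_center sG'Z hG gG)) expg1n mulg1.
Qed.

Lemma BformE g h : g \in G -> h \in G -> B (cs g) (cs h) = [~ g, h].
Proof.
move=> gG hG; rewrite /Bform.
have [c Zc ->] := repr_coset_center gG; have [d Zd ->] := repr_coset_center hG.
have [Gc Gd] : c \in G /\ d \in G by rewrite !(subsetP sZG).
have Zcomm e t : e \in 'Z(G) -> t \in G -> [~ e, t] = 1 /\ [~ t, e] = 1.
  by case/centerP=> _ /[apply] cet; split; apply/eqP/commgP.
have [cgG dhG] : c * g \in G /\ d * h \in G by rewrite !groupM.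
have -> : c * g * (d * h) * (c * g)^-1 * (d * h)^-1 = [~ (c * g)^-1, (d * h)^-1].
  by rewrite /commg /conjg !invgK !mulgA.
rewrite commVg; last by apply: (commute_commg sG'Z); rewrite ?groupV.
rewrite commgV; last exact: (commute_commg sG'Z).
rewrite invgK (commMg_class2 sG'Z) ?groupM // (Zcomm c _ Zc dhG).1 mul1g.
by rewrite (commgM_class2 sG'Z) // (Zcomm d g Zd gG).2 mul1g.
Qed.

Lemma TmapE g : g \in G -> T (cs g) = g ^+ p.
Proof.
move=> gG; rewrite /Tmap; have [c Zc ->] := repr_coset_center gG.
rewrite expgMn ?(expg_center_p Zc) ?mul1g //.
by case/centerP: Zc => _; apply.
Qed.

Lemma TmapM : {in V &, {morph T : x y / x * y}}.
Proof.
move=> _ _ /VspP[g gG ->] /VspP[h hG ->].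
by rewrite -morphM ?(subsetP nZG) // !TmapE ?groupM // expgMn_p.
Qed.

Canonical Tmap_morphism := Morphism TmapM.

Lemma BformMl u : u \in V -> {in V &, {morph B^~ u : x y / x * y}}.
Proof.
move=> /VspP[t tG ->] _ _ /VspP[g gG ->] /VspP[h hG ->].
by rewrite -morphM ?(subsetP nZG) // !BformE ?groupM // (commMg_class2 sG'Z).
Qed.

Lemma Bform_sym x y : x \in V -> y \in V -> B y x = (B x y)^-1.
Proof. by move=> /VspP[g gG ->] /VspP[h hG ->]; rewrite !BformE // invg_comm. Qed.

Lemma Bformxx x : x \in V -> B x x = 1.
Proof. by move=> /VspP[g gG ->]; rewrite BformE // commgg. Qed.

Lemma Bform_center x y : x \in V -> y \in V -> B x y \in 'Z(G).
Proof. by move=> /VspP[g gG ->] /VspP[h hG ->]; rewrite BformE ?(commg_center sG'Z). Qed.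

Lemma BformMr u : u \in V -> {in V &, {morph B u : x y / x * y}}.
Proof.
move=> uV x y xV yV; rewrite !(Bform_sym _ uV) ?groupM // BformMl // invMg.
case/centerP: (Bform_center yV uV) => _ /(_ (B x u)) cB.
by rewrite -invMg -cB ?invMg // (subsetP sZG) ?Bform_center.
Qed.

Lemma Tmap_Qorbit x y : x \in V -> y \in Qorbit G x -> T y = T x.
Proof.
move=> /VspP[g gG ->] /QorbitP[f AZf ->]; rewrite fphiE // !TmapE ?AutZ_closed //.
by rewrite -(autmE (AutZ_Aut AZf)) -morphX //= autmE (AutZ_fix AZf) ?expg_p_center.
Qed.

Lemma Tmap_center x : x \in V -> T x \in 'Z(G).
Proof. by case/VspP=> g gG ->; rewrite TmapE ?expg_p_center. Qed.

Lemma Vsp_expgp x : x \in V -> x ^+ p = 1.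
Proof. by case/VspP=> g gG ->; rewrite -morphX ?(subsetP nZG) //= coset_id ?expg_p_center. Qed.

Variable z : gT.
Hypotheses (Zz : z \in 'Z(G)) (ntz : z != 1).

Lemma order_z : #[z] = p.
Proof.
apply/prime_nt_dvdP; rewrite ?order_eq1 //.
by rewrite -(card_center_extraspecial pG esG) order_dvdG.
Qed.

Lemma center_cycle : 'Z(G) = <[z]>.
Proof.
apply/eqP; rewrite eq_sym eqEcard cycle_subG Zz -orderE order_z.
by rewrite (card_center_extraspecial pG esG) leqnn.
Qed.

(* The discrete logarithm to base z on Z(G) = <[z]>; it is 0 outside Z(G). *)
Definition zlog c : nat := odflt 0 (omap val [pick i : 'I_p | c == z ^+ i]).

Lemma zlog_lt c : zlog c < p.
Proof.
by rewrite /zlog; case: pickP => [i _|_] /=; rewrite ?ltn_ord ?prime_gt0.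
Qed.

Lemma zlogK c : c \in 'Z(G) -> z ^+ zlog c = c.
Proof.
rewrite /zlog center_cycle => /cyclePmin[k]; rewrite order_z => lt_kp ->.
by case: pickP => [i /eqP -> //|/(_ (Ordinal lt_kp))]; rewrite eqxx.
Qed.

Lemma zlog_unique k c : k < p -> c = z ^+ k -> zlog c = k.
Proof.
move=> lt_kp def_c; have cZ : c \in 'Z(G) by rewrite def_c groupX.
apply/eqP; rewrite -(modn_small lt_kp) -(modn_small (zlog_lt c)).
by rewrite -order_z -eq_expg_mod_order zlogK // def_c.
Qed.

Lemma zlog_commgM a u v : a \in G -> u \in G -> v \in G ->
  zlog [~ a, u * v] = (zlog [~ a, u] + zlog [~ a, v]) %% p.
Proof.
move=> aG uG vG; apply: zlog_unique; first by rewrite ltn_pmod ?prime_gt0.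
rewrite (expg_mod _ (expg_center_p Zz)) expgD !zlogK ?(commg_center sG'Z) //.
exact: (commgM_class2 sG'Z).
Qed.

(* Since [~ a, _] : G -> Z(G) is a homomorphism, the binomial correction term makes this
   map multiplicative when a ^+ p = 1 (see transvectionM). *)
Definition transvection a c u : gT :=
  u * a ^+ (c * zlog [~ a, u]) * z ^+ (c * 'C(zlog [~ a, u], 2)).

Lemma transvectionM a c : a \in G -> a ^+ p = 1 ->
  {in G &, {morph transvection a c : u v / u * v}}.
Proof.
move=> aG ap u v uG vG; rewrite /transvection zlog_commgM //.
set K := zlog [~ a, u]; set L := zlog [~ a, v].
have zcentral m g : g \in G -> commute (z ^+ m) g.
  by move=> gG; case/centerP: (groupX m Zz) => _ /(_ g gG) /commute_sym.
have acp : (a ^+ c) ^+ p = 1 by rewrite -expgM mulnC expgM ap expg1n.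
have zcp : (z ^+ c) ^+ p = 1.
  by rewrite -expgM mulnC expgM (expg_center_p Zz) expg1n.
have -> : a ^+ (c * ((K + L) %% p)) = a ^+ (c * (K + L)).
  by rewrite !expgM (expg_mod _ acp).
have -> : z ^+ (c * 'C((K + L) %% p, 2)) = z ^+ (c * 'C(K + L, 2)).
  by rewrite !expgM -[LHS](expg_mod _ zcp) -[RHS](expg_mod _ zcp) bin2_modp.
have av : a ^+ (c * K) * v = v * a ^+ (c * K) * z ^+ (c * K * L).
  have avL : [~ a, v] = z ^+ L by rewrite zlogK ?(commg_center sG'Z).
  rewrite conjgC conjg_mulR commXg; last exact: (commute_commg sG'Z).
  by rewrite avL -expgM [(L * _)%N]mulnC mulgA.
rewrite !mulgA -[u * _ * _ * v]mulgA (zcentral _ v vG) mulgA.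
rewrite -[u * _ * v]mulgA av !mulgA -[_ * z ^+ (c * 'C(K, 2)) * _]mulgA.
rewrite (zcentral _ _ (groupX _ aG)) mulgA -[_ * z ^+ (c * K * L) * _]mulgA.
rewrite (zcentral _ _ (groupX _ aG)) mulgA -[_ * a ^+ (c * K) * _]mulgA -expgD.
rewrite -!mulgA -!expgD -mulnDr; congr (_ * (_ * (_ * z ^+ _))).
by rewrite bin2D; lia.
Qed.

Lemma transvection_id a c u : [~ a, u] = 1 -> transvection a c u = u.
Proof.
move=> au1; rewrite /transvection au1 (@zlog_unique 0) ?prime_gt0 //.
by rewrite muln0 !expg0 !mulg1.
Qed.

Lemma transvection_eq1 a c u : a \in G -> u \in G ->
  transvection a c u = 1 -> u = 1.
Proof.
move=> aG uG tu1; move: (tu1); rewrite /transvection -mulgA.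
set t := a ^+ _ * z ^+ _ => ut1.
have Gz : z \in G by rewrite (subsetP sZG).
have ut : u = t^-1 by rewrite -[u](mulgK t) ut1 mul1g.
suff au1 : [~ a, u] = 1 by rewrite -tu1 transvection_id.
have tG : t \in G by rewrite groupM ?groupX.
rewrite ut commgV; last exact: (commute_commg sG'Z).
rewrite (commgM_class2 sG'Z) ?groupX // commgX; last by rewrite commgg; apply: commute1.
rewrite commgg expg1n mul1g; apply/eqP; rewrite invg_eq1; apply/commgP/commute_sym.
by case/centerP: (groupX (c * 'C(zlog [~ a, u], 2)) Zz) => _; apply.
Qed.

Lemma transvection_autZ a c : a \in G -> a ^+ p = 1 ->
  exists2 f, f \in AutZ G & {in G, f =1 transvection a c}.
Proof.
move=> aG ap; pose f := Morphism (transvectionM c aG ap).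
have injf : 'injm f.
  apply/subsetP => u /morphpreP[uG /set1P /transvection_eq1 -> //].
have fG : f @* G = G.
  apply/eqP; rewrite eqEcard card_injm // leqnn andbT.
  apply/subsetP => _ /morphimP[u _ uG ->] /=.
  by rewrite !groupM ?groupX // (subsetP sZG).
exists (aut injf fG) => [|u uG]; last by rewrite autE.
rewrite inE Aut_aut; apply/forall_inP => d Zd.
have Gd : d \in G by rewrite (subsetP sZG).
rewrite autE //= transvection_id //; apply/eqP/commgP.
by case/centerP: Zd => _ /(_ a aG) /commute_sym.
Qed.

Lemma mulg_mem_Qorbit d x : d \in V -> x \in V -> T d = 1 -> B d x != 1 ->
  x * d \in Qorbit G x.
Proof.
move=> /VspP[a aG ->] /VspP[u uG ->]; rewrite TmapE // BformE // => ap1 ntau.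
have k_gt0 : 0 < zlog [~ a, u].
  rewrite lt0n; apply: contra ntau => /eqP k0.
  by rewrite -(zlogK (commg_center sG'Z aG uG)) k0.
have [|c ck1] := @modn_inv_prime p (zlog [~ a, u]) pr_p; first by rewrite k_gt0 zlog_lt.
have [f AZf fE] := transvection_autZ c aG ap1.
apply/QorbitP; exists f => //; rewrite fphiE // fE // /transvection.
rewrite -(expg_mod _ ap1) ck1 (expg_mod _ ap1) expg1 coset_kerr ?groupX //.
by rewrite morphM ?(subsetP nZG).
Qed.

Lemma mem_Qorbit_Bform x y : x \in V -> y \in V -> T x = T y -> B y x != 1 ->
  y \in Qorbit G x.
Proof.
move=> xV yV Txy ntB; have dV : x^-1 * y \in V by rewrite groupM ?groupV.
have := mulg_mem_Qorbit dV xV; rewrite mulKVg; apply.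
  by rewrite morphM ?groupV //= morphV //= Txy mulVg.
rewrite (BformMl xV) ?groupV // [B x^-1 x](morphV (Morphism (BformMl xV))) //=.
by rewrite Bformxx // invg1 mul1g.
Qed.

Section Basis.
Variables (n : nat) (v w : nat -> coset_of 'Z(G)).
Hypothesis ssb : special_symplectic_basis G p z n v w.

Local Notation lc := (lincomb p n v w).

Let vV i : i < n -> v i \in V. Proof. by case: ssb => [[Vvw _ _] _ _ _] /Vvw[]. Qed.
Let wV i : i < n -> w i \in V. Proof. by case: ssb => [[Vvw _ _] _ _ _] /Vvw[]. Qed.
Let Bvw i : i < n -> B (v i) (w i) = z. Proof. by case: ssb => [_ + _ _]; apply. Qed.
Let Bortho i j : i < n -> j < n -> i != j ->
  [/\ B (v i) (w j) = 1, B (v i) (v j) = 1 & B (w i) (w j) = 1].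
Proof. by case: ssb => [_ _ + _]; apply. Qed.
Let n_gt0 : 0 < n. Proof. by case: ssb => [_ _ _ []]. Qed.
Let Tv0 : T (v 0) = z. Proof. by case: ssb => [_ _ _ []]. Qed.
Let Tv i : 0 < i < n -> T (v i) = 1. Proof. by case: ssb => [_ _ _ [_ _ + _]]; apply. Qed.
Let Tw i : i < n -> T (w i) = 1. Proof. by case: ssb => [_ _ _ [_ _ _ +]]; apply. Qed.

Local Notation i0 := (Ordinal n_gt0).

Lemma lincomb_Vsp c : lc c \in V.
Proof. by apply: group_prod => i _; rewrite groupM ?groupX ?vV ?wV. Qed.

Lemma Vsp_lincomb x : x \in V -> exists c, lc c = x.
Proof. by case: ssb => [[_ _ +] _ _ _]; apply. Qed.

Lemma Bform_lincomb c u : u \in V ->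
  B (lc c) u = \prod_(i < n) (B (v i) u ^+ (c i).1 * B (w i) u ^+ (c i).2).
Proof.
move=> uV; pose Bu := Morphism (BformMl uV); rewrite -[B _ u]/(Bu _) /lincomb.
rewrite morph_prod => [|i _]; last by rewrite groupM ?groupX ?vV ?wV.
by apply: eq_bigr => i _; rewrite morphM ?morphX ?groupX ?vV ?wV.
Qed.

Lemma Tmap_lincomb c :
  T (lc c) = \prod_(i < n) (T (v i) ^+ (c i).1 * T (w i) ^+ (c i).2).
Proof.
rewrite /lincomb morph_prod => [|i _]; last by rewrite groupM ?groupX ?vV ?wV.
by apply: eq_bigr => i _; rewrite morphM ?morphX ?groupX ?vV ?wV.
Qed.

Lemma Bform_lincomb_w c (j : 'I_n) : B (lc c) (w j) = z ^+ (c j).1.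
Proof.
rewrite Bform_lincomb ?wV // (prodg_single (j := j)) => [|i ij].
  by rewrite Bvw // Bformxx ?wV // expg1n mulg1.
by have [-> _ ->] := Bortho (ltn_ord i) (ltn_ord j) ij; rewrite !expg1n mulg1.
Qed.

Lemma Bform_lincomb_v c (j : 'I_n) : B (lc c) (v j) = (z ^+ (c j).2)^-1.
Proof.
rewrite Bform_lincomb ?vV // (prodg_single (j := j)) => [|i ij].
  by rewrite Bformxx ?vV // expg1n mul1g Bform_sym ?vV ?wV // Bvw // expgVn.
have [_ -> _] := Bortho (ltn_ord i) (ltn_ord j) ij.
have ji : j != i :> nat by rewrite eq_sym.
have [Bvjwi _ _] := Bortho (ltn_ord j) (ltn_ord i) ji.
by rewrite Bform_sym ?vV ?wV // Bvjwi invg1 !expg1n mulg1.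
Qed.

Lemma Tmap_lincomb_i0 c : T (lc c) = z ^+ (c i0).1.
Proof.
rewrite Tmap_lincomb (prodg_single (j := i0)) => [|i ii0].
  by rewrite Tv0 Tw // expg1n mulg1.
by rewrite Tv ?Tw // ?lt0n ?ii0 //= !expg1n mulg1.
Qed.

Lemma Tmap_Bform_w0 x : x \in V -> T x = B x (w 0).
Proof. by case/Vsp_lincomb => c <-; rewrite Tmap_lincomb_i0 (Bform_lincomb_w c i0). Qed.

Lemma Tmap_cycle_w0 x : x \in <[w 0]> -> T x = 1.
Proof. by case/cycleP => k ->; rewrite morphX ?wV //= Tw // expg1n. Qed.

Lemma exists_isotropic_Bform x : x \in V -> x \notin <[w 0]> ->
  exists2 a, a \in V & T a = 1 /\ B x a != 1.
Proof.
case/Vsp_lincomb=> c <- cNw.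
have /exists_inP[a aV /andP[/eqP Ta Bca]] : [exists a in V, (T a == 1) && (B (lc c) a != 1)].
  apply: contraR cNw; rewrite negb_exists_in => /forall_inP Bc0.
  have c1 i : (c i).1 = 0 :> nat.
    apply/eqP; rewrite -(@expg_eq1_small _ z) ?order_z ?ltn_ord // -Bform_lincomb_w.
    by have := Bc0 _ (wV (ltn_ord i)); rewrite Tw ?ltn_ord // eqxx negbK.
  have c2 (i : 'I_n) : i != i0 -> (c i).2 = 0 :> nat.
    move=> ii0; apply/eqP; rewrite -(@expg_eq1_small _ z) ?order_z ?ltn_ord //.
    rewrite -invg_eq1 -Bform_lincomb_v.
    by have := Bc0 _ (vV (ltn_ord i)); rewrite Tv ?lt0n ?ii0 ?ltn_ord // eqxx negbK.
  rewrite (_ : lc c = w 0 ^+ (c i0).2) ?mem_cycle // /lincomb (prodg_single (j := i0)).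
    by rewrite c1 mul1g.
  by move=> j ji0; rewrite c1 c2 // mulg1.
by exists a.
Qed.

Lemma mem_Qorbit_Tmap x y : x \in V -> y \in V ->
  x \notin <[w 0]> -> y \notin <[w 0]> -> T x = T y -> y \in Qorbit G x.
Proof.
move=> xV yV xNw yNw Txy; have [|/negPn/eqP Byx] := boolP (B y x != 1).
  exact: mem_Qorbit_Bform.
have [a aV [Ta [Bxa Bya]]] : exists2 a, a \in V & T a = 1 /\ B x a != 1 /\ B y a != 1.
  have [a aV [Ta Bxa]] := exists_isotropic_Bform xV xNw.
  have [b bV [Tb Byb]] := exists_isotropic_Bform yV yNw.
  have [Bya|/negPn/eqP Bya] := boolP (B y a != 1); first by exists a.
  have [Bxb|/negPn/eqP Bxb] := boolP (B x b != 1); first by exists b.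
  exists (a * b); rewrite ?groupM // morphM //= Ta Tb mulg1.
  by rewrite !(BformMr _ aV bV) // Bya Bxb mulg1 mul1g.
(* pass through x * a, which is in the orbit of x and pairs nontrivially with y *)
apply: (Qorbit_trans xV (mulg_mem_Qorbit aV xV Ta _)).
  by rewrite Bform_sym // invg_eq1.
apply: mem_Qorbit_Bform; rewrite ?groupM // ?morphM //= ?Ta ?mulg1 //.
by rewrite (BformMr yV xV aV) Byx mul1g.
Qed.

Lemma AutZ_fix_w0 f : f \in AutZ G -> fphi G f (w 0) = w 0.
Proof.
move=> AZf; have [h hG w0E] := VspP _ (wV n_gt0); rewrite w0E fphiE //.
(* T x = B x w_1 characterises the class of w_1, and T is f-invariant *)
have commg_h g : g \in G -> [~ g, h] = g ^+ p.
  by move=> gG; rewrite -BformE // -w0E -Tmap_Bform_w0 ?mem_quotient ?TmapE.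
have commg_fh g : g \in G -> [~ g, f h] = [~ g, h].
  move=> gG; have f'gG : (f^-1)%g g \in G by rewrite AutZ_closed ?groupV.
  rewrite -{1}(permKV f g) -(autmE (AutZ_Aut AZf)) -morphR //= autmE.
  rewrite commg_h // (commg_h _ f'gG) -(autmE (AutZ_Aut AZf)) morphX //= autmE.
  by rewrite permKV.
have Zfh : f h * h^-1 \in 'Z(G).
  apply/centerP; split=> [|g gG]; first by rewrite groupM ?groupV ?AutZ_closed.
  apply/commute_sym/commgP/eqP; rewrite (commgM_class2 sG'Z) ?groupV ?AutZ_closed //.
  rewrite commgV ?commg_fh ?mulgV //; exact: (commute_commg sG'Z).
by rewrite -(coset_kerl h Zfh) mulgKV.
Qed.

Lemma Qorbit_w0X b : Qorbit G (w 0 ^+ b) = [set w 0 ^+ b].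
Proof.
apply/setP => y; rewrite inE; apply/idP/eqP => [/QorbitP[f AZf ->]|->].
  by rewrite fphiX ?wV // AutZ_fix_w0.
by rewrite Qorbit_refl ?groupX ?wV.
Qed.

Lemma order_w0 : #[w 0] = p.
Proof.
have w0_nt : #[w 0] != 1%N.
  rewrite order_eq1; apply: contra ntz => /eqP w01.
  by rewrite -(Bvw n_gt0) w01 [B _ 1](morph1 (Morphism (BformMr (vV n_gt0)))).
by apply/(prime_nt_dvdP pr_p w0_nt); rewrite order_dvdn Vsp_expgp ?wV.
Qed.

Lemma card_Vsp : #|V| = (p ^ (2 * n))%N.
Proof.
have -> : V = lc @: setT.
  apply/setP => x; apply/idP/imsetP => [/Vsp_lincomb[c <-]|[c _ ->]].
    by exists c.
  exact: lincomb_Vsp.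
rewrite card_imset; last by case: ssb => [[]].
by rewrite cardsT card_ffun card_prod !card_ord mulnn -expnM.
Qed.

Lemma card_extraspecial_basis : #|G| = (p ^ (2 * n).+1)%N.
Proof.
by rewrite -(Lagrange sZG) -card_quotient // (card_center_extraspecial pG esG) card_Vsp expnS.
Qed.

Lemma Tmap_neq1_notin_w0 x : T x != 1 -> x \notin <[w 0]>.
Proof. by apply: contra => /Tmap_cycle_w0 ->. Qed.

Lemma Tmap_v0X a : T (v 0 ^+ a) = z ^+ a.
Proof. by rewrite morphX ?vV //= Tv0. Qed.

Local Notation Av := [set Qorbit G (v 0 ^+ a) | a : 'I_p & (0 < a)%N].
Local Notation Bw := [set Qorbit G (w 0 ^+ b) | b : 'I_p & (0 < b)%N].

Lemma Qorbit_Tmap_neq1 u : u \in V -> T u != 1 -> Qorbit G u \in Av.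
Proof.
move=> uV ntTu; move: (zlog_lt (T u)) (zlogK (Tmap_center uV)).
set a := zlog _ => lt_ap TuE; clearbody a.
have a_gt0 : 0 < a by rewrite lt0n; apply: contra ntTu => /eqP a0; rewrite -TuE a0.
have v0aV : v 0 ^+ a \in V by rewrite groupX ?vV.
apply/imsetP; exists (Ordinal lt_ap); rewrite ?inE //=.
apply/esym/Qorbit_eq => //; apply: mem_Qorbit_Tmap; rewrite ?Tmap_v0X //.
  exact: Tmap_neq1_notin_w0.
by rewrite Tmap_neq1_notin_w0 // Tmap_v0X TuE.
Qed.

Lemma Qorbit_cycle_w0 u : u \in <[w 0]> -> u != 1 -> Qorbit G u \in Bw.
Proof.
case/cyclePmin=> b; rewrite order_w0 => lt_bp -> ntw0b.
apply/imsetP; exists (Ordinal lt_bp); rewrite // inE lt0n.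
by apply: contra ntw0b => /eqP /= ->.
Qed.

Lemma Tmap_eq1_rank1 u : n = 1%N -> u \in V -> T u = 1 -> u \in <[w 0]>.
Proof.
move=> n1 /Vsp_lincomb[c <-]; rewrite Tmap_lincomb_i0 => /eqP.
rewrite expg_eq1_small ?order_z // => /eqP c1.
rewrite /lincomb (prodg_single (j := i0)) => [|i]; last first.
  have -> : i = i0 by apply/val_inj/eqP; rewrite /= -leqn0 -ltnS -[X in _ < X]n1.
  by rewrite eqxx.
by rewrite c1 mul1g mem_cycle.
Qed.

Lemma v1_rank_gt1 : 1 < n -> v 1 \in V :\ 1 /\ v 1 \notin <[w 0]>.
Proof.
move=> n_gt1; have v1V := vV n_gt1; have w1V := wV n_gt1.
rewrite !inE v1V andbT; split.
  apply: contra ntz => /eqP v11.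
  by rewrite -(Bvw n_gt1) v11 [B 1 _](morph1 (Morphism (BformMl w1V))).
apply: contra ntz => /cycleP[k v1E].
rewrite -(Bvw n_gt1) v1E [B _ (w 1)](morphX (Morphism (BformMl w1V))) ?wV //=.
by have [_ _ ->] := Bortho n_gt0 n_gt1 isT; rewrite expg1n.
Qed.

Lemma card_Av : #|Av| = p.-1.
Proof.
rewrite card_in_imset => [|a b _ _ eq_ab]; last first.
  have v0aV : v 0 ^+ a \in V by rewrite groupX ?vV.
  have /Tmap_Qorbit : v 0 ^+ b \in Qorbit G (v 0 ^+ a).
    by rewrite eq_ab Qorbit_refl ?groupX ?vV.
  rewrite !Tmap_v0X => /(_ v0aV) /eqP; rewrite eq_expg_mod_order order_z !modn_small //.
  by move/eqP/val_inj.
exact/card_ord_gt0/prime_gt0.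
Qed.

Lemma card_Bw : #|Bw| = p.-1.
Proof.
rewrite card_in_imset ?card_ord_gt0 ?prime_gt0 // => a b _ _.
rewrite !Qorbit_w0X => /set1_inj /eqP; rewrite eq_expg_mod_order order_w0 !modn_small //.
by move/eqP/val_inj.
Qed.

Lemma disjoint_Av_Bw : [disjoint Av & Bw].
Proof.
rewrite -setI_eq0; apply/eqP/setP => X; rewrite !inE.
apply/negbTE/negP => /andP[/imsetP[a a_gt0 ->] /imsetP[b _ Qab]].
have v0aV : v 0 ^+ a \in V by rewrite groupX ?vV.
have /(Tmap_Qorbit v0aV) : w 0 ^+ b \in Qorbit G (v 0 ^+ a) by rewrite Qab Qorbit_w0X set11.
rewrite Tmap_v0X morphX ?wV //= Tw // expg1n => /esym/eqP; rewrite expg_eq1_small ?order_z //.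
by rewrite inE lt0n in a_gt0; rewrite (negPf a_gt0).
Qed.

Lemma Av_Bw_sub : Av :|: Bw \subset Qorbits G.
Proof.
apply/subsetP => X /setUP[] /imsetP[a a_gt0 ->]; rewrite inE lt0n in a_gt0.
  apply: imset_f; rewrite !inE groupX ?vV // andbT; apply: contra a_gt0 => /eqP v0a1.
  by rewrite -(@expg_eq1_small _ z) ?order_z // -Tmap_v0X v0a1 morph1.
apply: imset_f; rewrite !inE groupX ?wV // andbT; apply: contra a_gt0 => /eqP w0a1.
by rewrite -(@expg_eq1_small _ (w 0)) ?order_w0 // w0a1.
Qed.

Lemma card_Av_Bw : #|Av :|: Bw| = (2 * p - 2)%N.
Proof.
rewrite cardsU (disjoint_setI0 disjoint_Av_Bw) cards0 subn0 card_Av card_Bw.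
by have := prime_gt1 pr_p; lia.
Qed.

Lemma Qorbits_rank1 : n = 1%N -> Qorbits G = Av :|: Bw.
Proof.
move=> n1; apply/eqP; rewrite eqEsubset; apply/andP; split; last exact: Av_Bw_sub.
apply/subsetP => _ /imsetP[u /setD1P[ntu uV] ->].
have [Tu|ntTu] := eqVneq (T u) 1; last by rewrite inE Qorbit_Tmap_neq1.
by rewrite inE Qorbit_cycle_w0 ?orbT ?Tmap_eq1_rank1.
Qed.

Lemma Qorbits_rank_gt1 : 1 < n -> Qorbits G = Av :|: Bw :|: [set Qorbit G (v 1)].
Proof.
move=> n_gt1; have [v1V1 v1Nw] := v1_rank_gt1 n_gt1; have /setD1P[_ v1V] := v1V1.
apply/eqP; rewrite eqEsubset; apply/andP; split; last first.
  by rewrite subUset Av_Bw_sub sub1set imset_f.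
apply/subsetP => _ /imsetP[u /setD1P[ntu uV] ->].
have [Tu|ntTu] := eqVneq (T u) 1; last by rewrite !inE Qorbit_Tmap_neq1.
have [uw|uNw] := boolP (u \in <[w 0]>); first by rewrite !inE Qorbit_cycle_w0 ?orbT.
by rewrite !inE (Qorbit_eq v1V) ?eqxx ?orbT // mem_Qorbit_Tmap // Tv // Tu.
Qed.

Lemma Qorbit_v1_notin : 1 < n -> Qorbit G (v 1) \notin Av :|: Bw.
Proof.
move=> n_gt1; have [/setD1P[_ v1V] v1Nw] := v1_rank_gt1 n_gt1.
have v1v1 := Qorbit_refl v1V.
rewrite inE negb_or; apply/andP; split; apply/imsetP => -[a]; rewrite inE lt0n => nza Qv1.
  have v0aV : v 0 ^+ a \in V by rewrite groupX ?vV.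
  move: v1v1; rewrite Qv1 => /(Tmap_Qorbit v0aV); rewrite Tv // Tmap_v0X.
  by move/esym/eqP; rewrite expg_eq1_small ?order_z // (negPf nza).
by move: v1v1; rewrite Qv1 Qorbit_w0X inE => /eqP v1E; rewrite v1E mem_cycle in v1Nw.
Qed.

End Basis.

End Extraspecial.

Theorem lemma4p7 (gT : finGroupType) (G : {group gT}) (p : nat)
  (z : gT) (n : nat) (v w : nat -> coset_of 'Z(G)) :
  prime p -> odd p -> p.-group G -> extraspecial G -> exponent G = (p ^ 2)%N ->
  z \in 'Z(G) -> z != 1 ->
  special_symplectic_basis G p z n v w ->
  [/\ (* (i) *)
      (forall x y, x \in Vsp G :\ 1 -> y \in Vsp G :\ 1 -> x != y ->
         Tmap p x = Tmap p y ->
         (Tmap p x != 1 /\ Tmap p y != 1) \/ (x \notin <[w 0%N]> /\ y \notin <[w 0%N]>) ->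
         y \in Qorbit G x),
      (* (ii) *)
      (#|G| = (p ^ 3)%N ->
         #|Qorbits G| = (2 * p - 2)%N /\
         Qorbits G = [set Qorbit G (v 0%N ^+ a) | a : 'I_p & (0 < a)%N]
                 :|: [set Qorbit G (w 0%N ^+ b) | b : 'I_p & (0 < b)%N])
    & (* (iii) *)
      ((p ^ 3 < #|G|)%N ->
         #|Qorbits G| = (2 * p - 1)%N /\
         Qorbits G = [set Qorbit G (v 0%N ^+ a) | a : 'I_p & (0 < a)%N]
                 :|: [set Qorbit G (w 0%N ^+ b) | b : 'I_p & (0 < b)%N]
                 :|: [set Qorbit G (v 1%N)])].
Proof.
move=> pr_p odd_p pG esG _ Zz ntz ssb; have p_gt1 := prime_gt1 pr_p.
have cardG := card_extraspecial_basis pG esG ssb.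
split.
- move=> x y /setD1P[_ xV] /setD1P[_ yV] _ Txy xyNw.
  have [xNw yNw] : x \notin <[w 0%N]> /\ y \notin <[w 0%N]>.
    by case: xyNw => // -[ntTx ntTy]; rewrite !(Tmap_neq1_notin_w0 pr_p odd_p pG esG ssb).
  exact: (mem_Qorbit_Tmap pr_p odd_p pG esG Zz ntz ssb).
- move=> G_p3; have n1 : n = 1%N.
    by move: G_p3; rewrite cardG => /eqP; rewrite eqn_exp2l // => /eqP; lia.
  rewrite (Qorbits_rank1 pr_p odd_p pG esG Zz ntz ssb n1); split=> //.
  exact: (card_Av_Bw pr_p odd_p pG esG Zz ntz ssb).
- move=> G_gt_p3; have n_gt1 : (1 < n)%N.
    by move: G_gt_p3; rewrite cardG ltn_exp2l //; lia.
  rewrite (Qorbits_rank_gt1 pr_p odd_p pG esG Zz ntz ssb n_gt1); split=> //.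
  rewrite setUC cardsU1 (Qorbit_v1_notin pr_p odd_p pG esG Zz ntz ssb n_gt1).
  by rewrite (card_Av_Bw pr_p odd_p pG esG Zz ntz ssb); lia.
Qed.
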